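(* Let $\mathcal{FV}(\Omega)$ be a dom-space and $E$ a non-trivial locally convex Hausdorff space over $\mathbb{K}$ with directed fundamental system of seminorms $(p_\alpha)_{\alpha\in\mathfrak{A}}$. Then (a) $T^{\mathbb{K}}_{m,x}\in\mathcal{FV}(\Omega)'$ for all $m\in M$ and $x\in\omega_m$; (b) the topology of $\mathcal{FV}(\Omega)\varepsilon E$ is given by the system of seminorms $\|u\|_{j,m,\alpha}:=\sup_{x\in\omega_m}p_\alpha\bigl(u(T^{\mathbb{K}}_{m,x})\bigr)\nu_{j,m}(x)$, $u\in\mathcal{FV}(\Omega)\varepsilon E$, for $j\in J$, $m\in M$, $\alpha\in\mathfrak{A}$.
   Context: $\mathbb{K}\in\{\mathbb{R},\mathbb{C}\}$. Let $\Omega$ be a non-empty set, $J,M$ non-empty index sets, $(\omega_m)_{m\in M}$ non-empty sets and $\nu_{j,m}\colon\omega_m\to[0,\infty)$ such that for all $m$, $x\in\omega_m$ there is $j$ with $\nu_{j,m}(x)>0$. Let $\operatorname{AP}(\Omega)\subset\mathbb{K}^\Omega$ be a linear subspace and $T^{\mathbb{K}}_m\colon\operatorname{dom}T^{\mathbb{K}}_m\to\mathbb{K}^{\omega_m}$ linear maps on linear subspaces $\operatorname{dom}T^{\mathbb{K}}_m\subset\mathbb{K}^\Omega$. $\mathcal{FV}(\Omega):=\{f\in\operatorname{AP}(\Omega)\cap\bigcap_m\operatorname{dom}T^{\mathbb{K}}_m: |f|_{j,m}:=\sup_{x\in\omega_m}|T^{\mathbb{K}}_m(f)(x)|\nu_{j,m}(x)<\infty\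 \forall j,m\}$ with these seminorms; $T^{\mathbb{K}}_{m,x}(f):=T^{\mathbb{K}}_m(f)(x)$ (restricted to $\mathcal{FV}(\Omega)$). $\mathcal{FV}(\Omega)$ is a dom-space if it is Hausdorff, the system $(|\cdot|_{j,m})$ is directed and every point evaluation $\delta_x\colon f\mapsto f(x)$, $x\in\Omega$, is in $\mathcal{FV}(\Omega)'$. $\mathcal{FV}(\Omega)\varepsilon E$ is the space of continuous linear maps $\mathcal{FV}(\Omega)'_\kappa\to E$ ($\kappa$: topology of uniform convergence on absolutely convex compact subsets of $\mathcal{FV}(\Omega)$), equipped with the topology of uniform convergence on equicontinuous subsets of $\mathcal{FV}(\Omega)'$. *)

From mathcomp Require Import all_boot all_order all_algebra.
From mathcomp Require Import all_classical all_reals.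
From mathcomp Require Import complex.
Import Order.TTheory GRing.Theory Num.Theory.

Set Implicit Arguments.
Unset Strict Implicit.
Unset Printing Implicit Defensive.

Local Open Scope ring_scope.
Local Open Scope classical_set_scope.

(* The scalar field K in {R, C}: [KK R true] is R, [KK R false] is     *)
(* C = R[i] (complex numbers over the real numbers R).                 *)
Definition KK (R : realType) (b : bool) : numFieldType :=
  if b then (R : numFieldType) else (R[i] : numFieldType).

Definition absK (R : realType) (b : bool) : KK R b -> R :=
  match b return KK R b -> R with
  | true => fun x => `|x|
  | false => fun z => complex.Re `|z|
  end.

Section LCS.
Context (R : realType) (b : bool).
Local Notation K := (KK R b).
Local Notation aK := (@absK R b).

Definition bigmax (I : Type) (s : seq I) (F : I -> R) : R :=
  \big[Num.max/0]_(i <- s) F i.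

(* The (relative) topology generated on a set S of functions T -> W by a
   family of seminorms (p i)_i : U is open iff U is contained in S and
   every point v of U has a neighbourhood
   {w in S | max_{i in s} p_i(w - v) < e}, s finite, e > 0, inside U. *)
Definition sn_open (T : Type) (W : zmodType) (I : Type) (S : set (T -> W))
    (p : I -> (T -> W) -> R) (U : set (T -> W)) : Prop :=
  U `<=` S /\
  forall v, U v -> exists (s : seq I) (e : R), 0 < e /\
    forall w, S w -> bigmax s (fun i => p i (w \- v)) < e -> U w.

Definition sn_compact (T : Type) (W : zmodType) (I : Type) (S : set (T -> W))
    (p : I -> (T -> W) -> R) (C : set (T -> W)) : Prop :=
  C `<=` S /\
  forall (L : Type) (U : L -> set (T -> W)),
    (forall l, sn_open S p (U l)) -> C `<=` \bigcup_l U l ->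
    exists (n : nat) (ls : 'I_n -> L), C `<=` \bigcup_k U (ls k).

Definition lin_subspace (Om : Type) (S : set (Om -> K)) : Prop :=
  S (fun _ => 0) /\
  forall (a : K) f g, S f -> S g -> S (fun w => a * f w + g w).

Definition lin_on (Om D : Type) (S : set (Om -> K)) (T : (Om -> K) -> D -> K)
  : Prop :=
  forall (a : K) f g, S f -> S g ->
    T (fun w => a * f w + g w) = (fun x => a * T f x + T g x).

Definition abs_convex (Om : Type) (C : set (Om -> K)) : Prop :=
  forall f g (a c : K), C f -> C g -> aK a + aK c <= 1 ->
    C (fun w => a * f w + c * g w).

Definition is_seminorm (E : lmodType K) (p : E -> R) : Prop :=
  (forall e, 0 <= p e) /\
  (forall (a : K) e, p (a *: e) = aK a * p e) /\
  (forall e1 e2, p (e1 + e2) <= p e1 + p e2).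

Definition nontriv_lcHs_directed (E : lmodType K) (A : Type) (pE : A -> E -> R)
  : Prop :=
  (forall al, is_seminorm (pE al)) /\
  (forall al be, exists ga (C : R), forall e,
      Num.max (pE al e) (pE be e) <= C * pE ga e) /\
  (forall e, (forall al, pE al e = 0) -> e = 0) /\
  (exists e : E, e <> 0).

Section FV.
Context (Om J M : Type) (om : M -> Type) (nu : J -> forall m, om m -> R)
        (AP : set (Om -> K)) (domT : M -> set (Om -> K))
        (T : forall m, (Om -> K) -> om m -> K).

Definition FVset : set (Om -> K) :=
  [set f | AP f /\ (forall m, domT m f) /\
           forall j m, has_ubound (range (fun x : om m => aK (T f x) * nu j x))].

Definition FVsn (i : J * M) (f : Om -> K) : R :=
  sup (range (fun x : om i.2 => aK (T f x) * nu i.1 x)).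

Definition FVdual (y : (Om -> K) -> K) : Prop :=
  (forall (a : K) f g, FVset f -> FVset g ->
      y (fun w => a * f w + g w) = a * y f + y g) /\
  exists (s : seq (J * M)) (C : R),
    forall f, FVset f -> aK (y f) <= C * bigmax s (fun i => FVsn i f).

Definition FVequicont (H : set ((Om -> K) -> K)) : Prop :=
  H `<=` FVdual /\
  exists (s : seq (J * M)) (C : R),
    forall y f, H y -> FVset f -> aK (y f) <= C * bigmax s (fun i => FVsn i f).

Definition Tmx (m : M) (x : om m) : (Om -> K) -> K := fun f => T f x.

Definition dom_space : Prop :=
  (forall f, FVset f -> (forall i, FVsn i f = 0) -> f = (fun _ => 0)) /\
  (forall i1 i2, exists i3 (C : R), forall f, FVset f ->
      Num.max (FVsn i1 f) (FVsn i2 f) <= C * FVsn i3 f) /\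
  (forall x : Om, FVdual (fun f => f x)).

Definition FVabsconv_compact (C : set (Om -> K)) : Prop :=
  abs_convex C /\ sn_compact FVset FVsn C.

Section Eps.
Context (E : lmodType K) (A : Type) (pE : A -> E -> R).

(* FV(Omega) eps E: continuous linear maps FV(Omega)'_kappa -> E, where
   kappa is generated by the seminorms y |-> sup_{f in C} |y f| for
   absolutely convex compact C in FV(Omega). *)
Definition FVepsE (u : ((Om -> K) -> K) -> E) : Prop :=
  (forall (a : K) y1 y2, FVdual y1 -> FVdual y2 ->
      u (fun f => a * y1 f + y2 f) = a *: u y1 + u y2) /\
  forall al, exists (n : nat) (Cs : 'I_n -> set (Om -> K)),
    (forall k, FVabsconv_compact (Cs k)) /\
    exists C : R, forall y, FVdual y ->
      pE al (u y) <= C * \big[Num.max/0]_(k < n) sup [set aK (y f) | f in Cs k].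

(* topology of uniform convergence on equicontinuous subsets of FV' *)
Definition eps_index := ({H : set ((Om -> K) -> K) | FVequicont H} * A)%type.

Definition eps_sn (i : eps_index) (u : ((Om -> K) -> K) -> E) : R :=
  sup [set pE i.2 (u y) | y in sval i.1].

Definition wsn (i : J * M * A) (u : ((Om -> K) -> K) -> E) : R :=
  sup (range (fun x : om i.1.2 => pE i.2 (u (@Tmx i.1.2 x)) * nu i.1.1 x)).

End Eps.
End FV.
End LCS.

From mathcomp Require Import all_boot all_order all_algebra.
From mathcomp Require Import all_classical all_reals.
From mathcomp Require Import complex.
From mathcomp Require Import ring lra.
From Stdlib Require List.
Import Order.TTheory GRing.Theory Num.Theory.
Local Open Scope ring_scope.
Local Open Scope classical_set_scope.
Set Implicit Arguments. Unset Strict Implicit. Unset Printing Implicit Defensive.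

(* (a): |T_{m,x} f| <= |f|_{j,m} / nu_{j,m}(x) for any j with nu_{j,m}(x) > 0.

   (b): the set of y in FV' with |y| <= |.|_{j,m} is equicontinuous and contains every
   nu_{j,m}(x) T_{m,x}, so ||.||_{j,m,alpha} is dominated by an epsilon-seminorm.  Conversely,
   if |y| <= C max_s |.|_{j,m}, then p_alpha(u y) <= C max_s ||u||_{j,m,alpha}: u is continuous
   for uniform convergence on compacts, and on finitely many compacts y is uniformly approximated
   by combinations of the nu_{j,m}(x) T_{m,x}, (j,m) in s, of total weight at most C + eta.  As
   compacts are totally bounded, it is enough to approximate y at the points of a finite net;
   this finite-dimensional bipolar theorem follows from Hahn-Banach on R^(2N), applied to the
   gauge of the set of achievable value vectors. *)

Section Scalars.
Variables (R : realType) (b : bool).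
Local Notation K := (KK R b).

Definition embK : {rmorphism R -> K} :=
  match b as b0 return {rmorphism R -> KK R b0} with
  | true => idfun | false => real_complex R end.

(* For K = R the imaginary part and the imaginary unit are both 0, so that
   z = embK (ReK z) + embK (ImK z) * iK holds uniformly in b. *)
Definition ReK : K -> R :=
  match b as b0 return KK R b0 -> R with true => id | false => @complex.Re R end.
Definition ImK : K -> R :=
  match b as b0 return KK R b0 -> R with true => fun=> 0 | false => @complex.Im R end.
Definition iK : K := match b as b0 return KK R b0 with true => 0 | false => 'i%C end.

Lemma embK_absK (z : K) : embK (absK z) = `|z|.
Proof. by rewrite /embK /absK; case: b z. Qed.

Lemma ler_embK x y : (embK x <= embK y) = (x <= y).
Proof. by rewrite /embK; case: b => //=; rewrite lecR. Qed.

Lemma absK_emb t : absK (embK t) = `|t|.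
Proof. by rewrite /embK /absK; case: b => //=; rewrite expr0n /= addr0 sqrtr_sqr. Qed.

Lemma absK_ge0 (z : K) : 0 <= absK z.
Proof. by rewrite -ler_embK rmorph0 embK_absK. Qed.

Lemma absKM (x y : K) : absK (x * y) = absK x * absK y.
Proof. by apply: (fmorph_inj embK); rewrite rmorphM !embK_absK normrM. Qed.

Lemma absKD (x y : K) : absK (x + y) <= absK x + absK y.
Proof. by rewrite -ler_embK rmorphD !embK_absK ler_normD. Qed.

Lemma absK0 : absK (0 : K) = 0.
Proof. by apply: (fmorph_inj embK); rewrite embK_absK rmorph0 normr0. Qed.

Lemma absK1 : absK (1 : K) = 1.
Proof. by apply: (fmorph_inj embK); rewrite embK_absK rmorph1 normr1. Qed.

Lemma absKN1 : absK (-1 : K) = 1.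
Proof. by apply: (fmorph_inj embK); rewrite embK_absK rmorph1 normrN1. Qed.

Lemma ReK_le (z : K) : ReK z <= absK z.
Proof.
rewrite /ReK /absK; case: b z => [z|[x y]] /=; first exact: ler_norm.
rewrite (le_trans (ler_norm x)) // -sqrtr_sqr ler_sqrt ?lerDl ?sqr_ge0 //.
by rewrite addr_ge0 ?sqr_ge0.
Qed.

Lemma ReKD : {morph ReK : x y / x + y}.
Proof. by rewrite /ReK; case: b => // -[? ?] []. Qed.

Lemma ReK_embK t : ReK (embK t) = t.
Proof. by rewrite /ReK /embK; case: b. Qed.

Lemma ReK0 : ReK 0 = 0.
Proof. by rewrite -(rmorph0 embK) ReK_embK. Qed.

Lemma ReK_embM t (z : K) : ReK (embK t * z) = t * ReK z.
Proof. by rewrite /ReK /embK; case: b z => // -[x y] /=; ring. Qed.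

Lemma ReK_pairing a c (z : K) :
  ReK ((embK a - embK c * iK) * z) = a * ReK z + c * ImK z.
Proof. by rewrite /ReK /ImK /embK /iK; case: b z => [z|[x y]] /=; ring. Qed.

Lemma ReK_ImK_decomp (z : K) : z = embK (ReK z) + embK (ImK z) * iK.
Proof.
rewrite /ReK /ImK /embK /iK; case: b z => [z|[x y]] /=; first by rewrite mulr0 addr0.
by apply/eqP; rewrite eq_complex /=; apply/andP; split; apply/eqP; ring.
Qed.

Lemma exists_rotation (z : K) : exists w : K, absK w = 1 /\ ReK (w * z) = absK z.
Proof.
have [->|z0] := eqVneq z 0.
  exists 1; rewrite mulr0 absK0; split; last by rewrite /ReK; case: b.
  by rewrite absK1.
have nz0 : absK z != 0.
  by apply: contra z0 => /eqP/(congr1 embK); rewrite embK_absK rmorph0 => /eqP; rewrite normr_eq0.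
exists (embK (absK z) / z); split; last by rewrite mulfVK // ReK_embK.
by apply: (mulIf nz0); rewrite -absKM mulfVK // absK_emb ger0_norm ?absK_ge0 // mul1r.
Qed.

End Scalars.

Arguments embK {R b}.
Arguments iK {R b}.

Section RealBounds.
Variables (R : realType) (I : Type).
Implicit Types (s : seq I) (F : I -> R).

Lemma bigmax_ge0 s F : 0 <= bigmax s F.
Proof. exact: bigmax_ge_id. Qed.

Lemma le_bigmax_In s F i : List.In i s -> F i <= bigmax s F.
Proof.
rewrite /bigmax; elim: s => [//|j s IH] /= [->|/IH]; rewrite big_cons le_max ?lexx //.
by move->; rewrite orbT.
Qed.

Lemma bigmax_le_In s F B :
  0 <= B -> (forall i, List.In i s -> F i <= B) -> bigmax s F <= B.
Proof.
rewrite /bigmax => B0; elim: s => [|j s IH] FB; rewrite ?big_nil ?big_cons // ge_max.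
by rewrite FB /=; [apply: IH => i si; apply: FB; right | left].
Qed.

Lemma sup_image_le (T : Type) (S : set T) (F : T -> R) B :
  0 <= B -> (forall t, S t -> F t <= B) -> sup [set F t | t in S] <= B.
Proof.
move=> B0 le_B; have [[t St]|S0] := pselect (exists t, S t); last first.
  rewrite (_ : [set F t | t in S] = set0) ?sup0 //.
  by apply/seteqP; split=> // r [t St _]; apply: S0; exists t.
by apply: ge_sup => [|_ [u Su <-]]; [exists (F t), t | apply: le_B].
Qed.

Lemma ler_add_small (x y c : R) : 0 <= c ->
  (forall eta, 0 < eta -> eta <= 1 -> x <= y + eta * c) -> x <= y.
Proof.
move=> c0 le_xy; apply/ler_addgt0Pr => e e0.
have c1 : 0 < c + 1 by rewrite ltr_wpDl.
pose eta := Num.min 1 (e / (c + 1)).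
have eta0 : 0 < eta by rewrite lt_min ltr01 divr_gt0.
have eta1 : eta <= 1 by rewrite ge_min lexx.
have eta_e : eta <= e / (c + 1) by rewrite ge_min lexx orbT.
apply: le_trans (le_xy eta eta0 eta1) _; rewrite lerD2l.
apply: le_trans (_ : e / (c + 1) * c <= _); first by rewrite ler_wpM2r.
by rewrite mulrAC ler_pdivrMr // ler_wpM2l ?(ltW e0) // lerDl.
Qed.

End RealBounds.

Definition cat_fam (T : Type) n1 n2 (F1 : 'I_n1 -> T) (F2 : 'I_n2 -> T) (k : 'I_(n1 + n2)) :=
  match fintype.split k with inl k1 => F1 k1 | inr k2 => F2 k2 end.

Lemma cat_famL (T : Type) n1 n2 (F1 : 'I_n1 -> T) (F2 : 'I_n2 -> T) k :
  cat_fam F1 F2 (lshift n2 k) = F1 k.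
Proof. by rewrite /cat_fam (unsplitK (inl k)). Qed.

Lemma cat_famR (T : Type) n1 n2 (F1 : 'I_n1 -> T) (F2 : 'I_n2 -> T) k :
  cat_fam F1 F2 (rshift n1 k) = F2 k.
Proof. by rewrite /cat_fam (unsplitK (inr k)). Qed.

Lemma bigmax_cat_famL (R : realType) (T : Type) n1 n2 (F1 : 'I_n1 -> T) (F2 : 'I_n2 -> T)
    (G : T -> R) :
  \big[Num.max/0]_(k < n1) G (F1 k) <= \big[Num.max/0]_(k < n1 + n2) G (cat_fam F1 F2 k).
Proof.
apply: bigmax_le => [|k _]; first exact: bigmax_ge_id.
by rewrite -(cat_famL F1 F2) (le_bigmax _ (fun k => G (cat_fam F1 F2 k))).
Qed.

Lemma bigmax_cat_famR (R : realType) (T : Type) n1 n2 (F1 : 'I_n1 -> T) (F2 : 'I_n2 -> T)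
    (G : T -> R) :
  \big[Num.max/0]_(k < n2) G (F2 k) <= \big[Num.max/0]_(k < n1 + n2) G (cat_fam F1 F2 k).
Proof.
apply: bigmax_le => [|k _]; first exact: bigmax_ge_id.
by rewrite -(cat_famR F1 F2) (le_bigmax _ (fun k => G (cat_fam F1 F2 k))).
Qed.

Section FiniteHahnBanach.
Variables (R : realType) (V : lmodType R) (mu : V -> R).
Hypotheses (muD : forall x y, mu (x + y) <= mu x + mu y)
  (muZ : forall t x, 0 <= t -> mu (t *: x) = t * mu x).

Lemma sublinear0 : mu 0 = 0.
Proof. by rewrite -(scale0r 0) muZ // mul0r. Qed.

Lemma sublinear_homogeneous_le t x : t * mu x <= mu (t *: x).
Proof.
have [t0|t0] := lerP 0 t; first by rewrite muZ.
have mu_opp : - mu x <= mu (- x).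
  by rewrite -subr_ge0 opprK addrC -sublinear0 -(subrr x) muD.
have nt0 : 0 <= - t by rewrite oppr_ge0 ltW.
by rewrite -[t]opprK scaleNr -scalerN muZ // mulNr -mulrN ler_wpM2l.
Qed.

Section ExtensionStep.
Variables (X : lmodType R) (P : X -> V) (phi : X -> R).
Hypotheses (PD : forall x y, P (x + y) = P x + P y) (PZ : forall t x, P (t *: x) = t *: P x)
  (phiD : forall x y, phi (x + y) = phi x + phi y)
  (phiZ : forall t x, phi (t *: x) = t * phi x)
  (phi_le : forall x, phi x <= mu (P x)).

Let unit_step w : exists be,
  forall x, phi x + be <= mu (P x + w) /\ phi x - be <= mu (P x - w).
Proof.
pose S := [set phi x - mu (P x - w) | x in [set: X]].
have S_ub x x' : phi x - mu (P x - w) <= mu (P x' + w) - phi x'.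
  have := muD (P x - w) (P x' + w); rewrite addrACA addNr addr0.
  by have := phi_le (x + x'); rewrite phiD PD; lra.
have hS : has_ubound S by exists (mu (P 0 + w) - phi 0) => _ [x _ <-].
exists (sup S) => x; split.
  suff : sup S <= mu (P x + w) - phi x by lra.
  by apply: ge_sup => [|_ [x' _ <-]]; [exists (phi 0 - mu (P 0 - w)), 0|].
suff : phi x - mu (P x - w) <= sup S by lra.
by apply: ub_le_sup => //; exists x.
Qed.

Let scale_step c w : (forall x, phi x + c <= mu (P x + w)) ->
  forall r x, 0 < r -> phi x + r * c <= mu (P x + r *: w).
Proof.
move=> cw r x r0; have rK : r * r^-1 = 1 by rewrite mulfV ?gt_eqF.
have -> : P x + r *: w = r *: (P (r^-1 *: x) + w).
  by rewrite scalerDr PZ scalerA rK scale1r.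
have -> : phi x + r * c = r * (phi (r^-1 *: x) + c).
  by rewrite mulrDr phiZ mulrA rK mul1r.
by rewrite muZ ?(ltW r0) // ler_wpM2l ?(ltW r0).
Qed.

Lemma dominated_extension_step w :
  exists be, forall x s, phi x + s * be <= mu (P x + s *: w).
Proof.
have [be hbe] := unit_step w; exists be => x s.
have [s0|s0|->] := ltgtP s 0; last by rewrite mul0r scale0r !addr0.
  have ns0 : 0 < - s by rewrite oppr_gt0.
  have := scale_step (fun x => proj2 (hbe x)) x ns0.
  by rewrite mulrNN scalerN scaleNr opprK.
exact: (scale_step (fun x => proj1 (hbe x)) x s0).
Qed.

End ExtensionStep.

Lemma sublinear_dominated_extension (v : V) n (W : 'I_n -> V) :
  exists be : 'I_n -> R, forall t (c : 'I_n -> R),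
    t * mu v + \sum_(k < n) c k * be k <= mu (t *: v + \sum_(k < n) c k *: W k).
Proof.
elim: n W => [|n IH] W.
  by exists (fun=> 0) => t c; rewrite !big_ord0 !addr0 sublinear_homogeneous_le.
have [be' hbe'] := IH (fun k => W (lift ord0 k)).
pose X := (R^o * ('I_n -> R^o))%type.
pose P (x : X) := x.1 *: v + \sum_(k < n) x.2 k *: W (lift ord0 k).
pose phi (x : X) := x.1 * mu v + \sum_(k < n) x.2 k * be' k.
have PD x y : P (x + y) = P x + P y.
  rewrite /P scalerDl addrACA -big_split /=; congr (_ + _).
  by apply: eq_bigr => k _; rewrite scalerDl.
have PZ t x : P (t *: x) = t *: P x.
  rewrite /P scalerDr scalerA scaler_sumr; congr (_ + _).
  by apply: eq_bigr => k _; rewrite scalerA.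
have phiD x y : phi (x + y) = phi x + phi y.
  rewrite /phi mulrDl addrACA -big_split /=; congr (_ + _).
  by apply: eq_bigr => k _; rewrite mulrDl.
have phiZ t x : phi (t *: x) = t * phi x.
  rewrite /phi mulrDr mulrA mulr_sumr; congr (_ + _).
  by apply: eq_bigr => k _; rewrite mulrA.
have [be0 hbe0] := dominated_extension_step PD PZ phiD phiZ (fun x => hbe' x.1 x.2) (W ord0).
exists (fun k => if unlift ord0 k is Some k' then be' k' else be0) => t c.
rewrite !big_ord_recl unlift_none.
under eq_bigr do rewrite liftK.
have := hbe0 (t, fun k => c (lift ord0 k)) (c ord0).
by rewrite /P /phi /= !addrA [X in X <= _]addrAC [X in _ <= mu X]addrAC.
Qed.

End FiniteHahnBanach.

Section SeminormTopology.
Variables (R : realType) (T : Type) (W : zmodType) (S : set (T -> W)).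
Hypothesis S_sub : forall v w, S v -> S w -> S (w \- v).

Lemma sn_open_dominated (I1 I2 : Type) (p : I1 -> (T -> W) -> R)
    (q : I2 -> (T -> W) -> R) (U : set (T -> W)) :
  (forall i, exists (s : seq I2) (c : R),
     0 <= c /\ forall z, S z -> p i z <= c * bigmax s (fun k => q k z)) ->
  sn_open S p U -> sn_open S q U.
Proof.
move=> dom [US hU]; split => // v Uv.
have [s [e [e0 ball_in_U]]] := hU v Uv.
have /boolp.choice[ch hch] : forall i, exists sc : seq I2 * R,
    0 <= sc.2 /\ forall z, S z -> p i z <= sc.2 * bigmax sc.1 (fun k => q k z).
  by move=> i; have [s' [c hc]] := dom i; exists (s', c).
pose s' := List.flat_map (fun i => (ch i).1) s.
pose c := bigmax s (fun i => (ch i).2).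
have c0 : 0 <= c := bigmax_ge0 _ _.
exists s', (e / (c + 1)); split; first by rewrite divr_gt0 // ltr_wpDl.
move=> w Sw; rewrite ltr_pdivlMr ?ltr_wpDl // => small; apply: ball_in_U => //.
have Swv := S_sub (US v Uv) Sw; set B := bigmax s' _ in small.
have B0 : 0 <= B := bigmax_ge0 _ _.
apply: (@le_lt_trans _ _ (c * B)); last first.
  by apply: le_lt_trans small; rewrite mulrDr mulr1 mulrC lerDl.
apply: bigmax_le_In; first exact: mulr_ge0.
move=> i si; have [ci0 hi] := hch i; apply: le_trans (hi _ Swv) _.
apply: ler_pM => //; first exact: bigmax_ge0.
  exact: (le_bigmax_In (fun i => (ch i).2) si).
apply: bigmax_le_In => // k ki; apply: (le_bigmax_In (fun k => q k (w \- v))).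
by apply/List.in_flat_map; exists i.
Qed.

End SeminormTopology.

Section WeightedSpace.
Context (R : realType) (b : bool) (Om J M : Type) (om : M -> Type)
  (nu : J -> forall m : M, om m -> R)
  (AP : set (Om -> KK R b)) (domT : M -> set (Om -> KK R b))
  (T : forall m : M, (Om -> KK R b) -> om m -> KK R b).
Hypotheses (om_inhabited : forall m, inhabited (om m))
  (nu_ge0 : forall j m (x : om m), 0 <= nu j x)
  (AP_subspace : lin_subspace AP) (domT_subspace : forall m, lin_subspace (domT m))
  (T_linear : forall m, lin_on (domT m) (@T m))
  (nu_pos : forall m (x : om m), exists j, 0 < nu j x).

Local Notation K := (KK R b).
Local Notation FV := (FVset nu AP domT T).
Local Notation sn := (FVsn nu T).
Local Notation dual := (FVdual nu AP domT T).

Definition FVsnmax (s : seq (J * M)) (f : Om -> K) := bigmax s (fun i => sn i f).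

Definition lcomb (a : K) (f g : Om -> K) : Om -> K := fun w => a * f w + g w.

Lemma T_lcomb m a f g (x : om m) : domT m f -> domT m g ->
  T (lcomb a f g) x = a * T f x + T g x.
Proof. by move=> df dg; rewrite /lcomb (T_linear a df dg). Qed.

Lemma lcomb0 a : lcomb a (fun=> 0) (fun=> 0) = fun=> 0.
Proof. by apply: funext => w; rewrite /lcomb mulr0 addr0. Qed.

Lemma T_zero m (x : om m) : T (fun=> 0) x = 0.
Proof.
have [d0 _] := domT_subspace m.
by have := T_lcomb (-1) x d0 d0; rewrite lcomb0 mulN1r addNr.
Qed.

Lemma FVsn_ub f j m (x : om m) : FV f -> absK (T f x) * nu j x <= sn (j, m) f.
Proof. by case=> _ [_ bnd]; apply: ub_le_sup => //; exists x. Qed.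

Lemma FVsn_le f j m B : (forall x : om m, absK (T f x) * nu j x <= B) -> sn (j, m) f <= B.
Proof.
have [x] := om_inhabited m; move=> le_B.
by apply: ge_sup => [|_ [y _ <-]]; [exists (absK (T f x) * nu j x), x|].
Qed.

Lemma le_FVsnmax s f i : List.In i s -> sn i f <= FVsnmax s f.
Proof. exact: (le_bigmax_In (fun i => sn i f)). Qed.

Lemma FVsnmax_le s f B : 0 <= B ->
  (forall j m (x : om m), List.In (j, m) s -> absK (T f x) * nu j x <= B) -> FVsnmax s f <= B.
Proof.
by move=> B0 le_B; apply: bigmax_le_In => // -[j m] js; apply: FVsn_le => x; apply: le_B.
Qed.

Lemma FV0 : FV (fun=> 0).
Proof.
split; first by case: AP_subspace.
split=> [m|j m]; first by case: (domT_subspace m).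
by exists 0 => _ [x _ <-]; rewrite T_zero absK0 mul0r.
Qed.

Lemma lcomb_bound s a f g j m (x : om m) : FV f -> FV g -> List.In (j, m) s ->
  absK (T (lcomb a f g) x) * nu j x <= absK a * FVsnmax s f + FVsnmax s g.
Proof.
move=> Ff Fg js; have [_ [df _]] := Ff; have [_ [dg _]] := Fg.
rewrite T_lcomb //; apply: le_trans (_ : (absK a * absK (T f x) + absK (T g x)) * nu j x <= _).
  by rewrite ler_wpM2r // -absKM absKD.
rewrite mulrDl -mulrA lerD ?ler_wpM2l ?absK_ge0 //.
  exact: le_trans (FVsn_ub _ _ Ff) (le_FVsnmax _ js).
exact: le_trans (FVsn_ub _ _ Fg) (le_FVsnmax _ js).
Qed.

Lemma FV_lcomb a f g : FV f -> FV g -> FV (lcomb a f g).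
Proof.
move=> Ff Fg; have [af [df _]] := Ff; have [ag [dg _]] := Fg.
split; first by case: AP_subspace => _; apply.
split=> [m|j m]; first by case: (domT_subspace m) => _; apply.
exists (absK a * FVsnmax [:: (j, m)] f + FVsnmax [:: (j, m)] g) => _ [x _ <-].
by apply: lcomb_bound; rewrite //=; left.
Qed.

Lemma FVsnmax_lcomb s a f g : FV f -> FV g ->
  FVsnmax s (lcomb a f g) <= absK a * FVsnmax s f + FVsnmax s g.
Proof.
move=> Ff Fg; apply: FVsnmax_le => [|j m x]; last exact: lcomb_bound.
by rewrite addr_ge0 ?mulr_ge0 ?absK_ge0 ?bigmax_ge0.
Qed.

Lemma subf_lcomb (f g : Om -> K) : f \- g = lcomb (-1) g f.
Proof. by apply: funext => w; rewrite /lcomb mulN1r addrC. Qed.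

Lemma FV_sub f g : FV f -> FV g -> FV (f \- g).
Proof. by rewrite subf_lcomb => Ff Fg; apply: FV_lcomb. Qed.

Lemma FVsnmax_triangle s f g h : FV f -> FV g -> FV h ->
  FVsnmax s (f \- h) <= FVsnmax s (f \- g) + FVsnmax s (g \- h).
Proof.
move=> Ff Fg Fh; have -> : f \- h = lcomb 1 (f \- g) (g \- h).
  by apply: funext => w; rewrite /lcomb mul1r subrKA.
by apply: le_trans (FVsnmax_lcomb s 1 (FV_sub Ff Fg) (FV_sub Fg Fh)) _; rewrite absK1 mul1r.
Qed.

Lemma FVsnmax_subrr s f : FVsnmax s (f \- f) = 0.
Proof.
apply/eqP; rewrite eq_le bigmax_ge0 andbT; apply: FVsnmax_le => // j m x _.
have -> : f \- f = (fun=> 0) by apply: funext => w; rewrite /= subrr.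
by rewrite T_zero absK0 mul0r.
Qed.

Definition FVbounded (y : (Om -> K) -> K) s C :=
  forall f, FV f -> absK (y f) <= C * FVsnmax s f.

Lemma Tmx_dual m (x : om m) : dual (Tmx T x).
Proof.
split=> [a f g [_ [df _]] [_ [dg _]]|]; first exact: T_lcomb.
have [j nu_pos_x] := nu_pos x.
exists [:: (j, m)], (nu j x)^-1 => f Ff.
rewrite /Tmx ler_pdivlMl // mulrC.
by apply: le_trans (FVsn_ub _ _ Ff) (le_FVsnmax _ _); left.
Qed.

Lemma FVdual_lcomb y a f g : dual y -> FV f -> FV g -> y (lcomb a f g) = a * y f + y g.
Proof. by case=> lin _; apply: lin. Qed.

Lemma FVdual0 y : dual y -> y (fun=> 0) = 0.
Proof.
by move=> dy; have := FVdual_lcomb (-1) dy FV0 FV0; rewrite lcomb0 mulN1r addNr.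
Qed.

Lemma FVdual_bounded y : dual y -> exists s C, 0 <= C /\ FVbounded y s C.
Proof.
case=> _ [s [C yC]]; exists s, (Num.max C 0); split=> [|f Ff]; first by rewrite le_max lexx orbT.
by apply: le_trans (yC f Ff) _; rewrite ler_wpM2r ?bigmax_ge0 // le_max lexx.
Qed.

Lemma FVsnmax_catl s1 s2 f : FVsnmax s1 f <= FVsnmax (s1 ++ s2) f.
Proof.
by apply: bigmax_le_In (bigmax_ge0 _ _) _ => i i1; apply/le_FVsnmax/List.in_or_app; left.
Qed.

Lemma FVsnmax_catr s1 s2 f : FVsnmax s2 f <= FVsnmax (s1 ++ s2) f.
Proof.
by apply: bigmax_le_In (bigmax_ge0 _ _) _ => i i2; apply/le_FVsnmax/List.in_or_app; right.
Qed.

Lemma FVdual_zero : dual (fun=> 0).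
Proof.
by split=> [a f g _ _|]; [rewrite mulr0 addr0 | exists [::], 0 => f _; rewrite absK0 mul0r].
Qed.

Lemma FVdual_lin a y1 y2 : dual y1 -> dual y2 -> dual (fun f => a * y1 f + y2 f).
Proof.
move=> d1 d2; split=> [c f g Ff Fg|].
  by rewrite -/(lcomb c f g) !FVdual_lcomb //; ring.
have [s1 [C1 [C10 b1]]] := FVdual_bounded d1; have [s2 [C2 [C20 b2]]] := FVdual_bounded d2.
exists (s1 ++ s2), (absK a * C1 + C2) => f Ff.
apply: le_trans (absKD _ _) _; rewrite absKM mulrDl -mulrA lerD ?ler_wpM2l ?absK_ge0 //.
  exact: le_trans (b1 f Ff) (ler_wpM2l C10 (FVsnmax_catl _ _ _)).
exact: le_trans (b2 f Ff) (ler_wpM2l C20 (FVsnmax_catr _ _ _)).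
Qed.

Lemma FVdual_scale a y : dual y -> dual (fun f => a * y f).
Proof.
move=> dy; have := FVdual_lin a dy FVdual_zero.
by have -> // : (fun f => a * y f + 0) = (fun f => a * y f) by apply: funext => f; rewrite addr0.
Qed.

Lemma fun_sum_nil (I : Type) (a : I -> K) (F : I -> Om -> K) :
  (fun w => \sum_(i <- [::]) a i * F i w) = fun=> 0.
Proof. by apply: funext => w; rewrite big_nil. Qed.

Lemma fun_sum_cons (I : Type) i (r : seq I) (a : I -> K) (F : I -> Om -> K) :
  (fun w => \sum_(j <- i :: r) a j * F j w) =
  lcomb (a i) (F i) (fun w => \sum_(j <- r) a j * F j w).
Proof. by apply: funext => w; rewrite big_cons. Qed.

Lemma FV_sum (I : Type) (r : seq I) (a : I -> K) (F : I -> Om -> K) :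
  (forall i, FV (F i)) -> FV (fun w => \sum_(i <- r) a i * F i w).
Proof.
move=> FF; elim: r => [|i r IH]; first by rewrite fun_sum_nil; apply: FV0.
by rewrite fun_sum_cons; apply: FV_lcomb.
Qed.

Lemma FVdual_sum y (I : Type) (r : seq I) (a : I -> K) (F : I -> Om -> K) :
  dual y -> (forall i, FV (F i)) ->
  y (fun w => \sum_(i <- r) a i * F i w) = \sum_(i <- r) a i * y (F i).
Proof.
move=> dy FF; elim: r => [|i r IH]; first by rewrite fun_sum_nil big_nil FVdual0.
by rewrite fun_sum_cons FVdual_lcomb ?big_cons ?IH //; apply: FV_sum.
Qed.

Definition weighted_eval j m (x : om m) : (Om -> K) -> K := fun f => embK (nu j x) * T f x.

Definition generator s (g : (Om -> K) -> K) :=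
  exists j m (x : om m), List.In (j, m) s /\ g = weighted_eval j x.

Lemma generator_bound s g : generator s g -> FVbounded g s 1.
Proof.
move=> [j [m [x [js ->]]]] f Ff; rewrite mul1r absKM absK_emb ger0_norm // mulrC.
exact: le_trans (FVsn_ub _ _ Ff) (le_FVsnmax _ js).
Qed.

Lemma generator_dual s g : generator s g -> dual g.
Proof.
move=> gen; split; last by exists s, 1; apply: generator_bound.
have [j [m [x [_ ->]]]] := gen; move=> a f h [_ [df _]] [_ [dh _]].
by rewrite /weighted_eval -/(lcomb a f h) T_lcomb // mulrDr mulrCA.
Qed.

Definition combo (gs : seq (K * ((Om -> K) -> K))) (f : Om -> K) := \sum_(p <- gs) p.1 * p.2 f.
Definition weight (gs : seq (K * ((Om -> K) -> K))) := \sum_(p <- gs) absK p.1.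
Definition generated s (gs : seq (K * ((Om -> K) -> K))) :=
  forall p, List.In p gs -> generator s p.2.

Lemma weight_ge0 gs : 0 <= weight gs.
Proof. by apply: sumr_ge0 => p _; apply: absK_ge0. Qed.

Lemma combo_cons p gs : combo (p :: gs) = fun f => p.1 * p.2 f + combo gs f.
Proof. by apply: funext => f; rewrite /combo big_cons. Qed.

Lemma generated_cons s p gs : generated s (p :: gs) -> generator s p.2 /\ generated s gs.
Proof. by move=> gen; split=> [|q q_gs]; apply: gen; [left | right]. Qed.

Lemma combo_dual s gs : generated s gs -> dual (combo gs).
Proof.
elim: gs => [_|p gs IH /generated_cons[gen_p gen_gs]].
  have -> : combo [::] = fun=> 0 by apply: funext => f; rewrite /combo big_nil.
  exact: FVdual_zero.
by rewrite combo_cons; apply: FVdual_lin; [apply: generator_dual gen_p | apply: IH].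
Qed.

Lemma combo_bound s gs : generated s gs -> FVbounded (combo gs) s (weight gs).
Proof.
move=> + f Ff; elim: gs => [_|p gs IH /generated_cons[gen_p gen_gs]].
  by rewrite /combo /weight !big_nil absK0 mul0r.
rewrite combo_cons /weight big_cons mulrDl; apply: le_trans (absKD _ _) _.
apply: lerD; last exact: IH.
by rewrite absKM ler_wpM2l ?absK_ge0 // -[X in _ <= X]mul1r generator_bound.
Qed.

Definition is_net s e (C : set (Om -> K)) N (F : 'I_N -> Om -> K) :=
  (forall l, FV (F l)) /\ forall f, C f -> exists l, FVsnmax s (f \- F l) < e.

Lemma FVball_open s e g : FV g -> sn_open FV sn [set w | FV w /\ FVsnmax s (w \- g) < e].
Proof.
move=> Fg; split=> [w []//|v [Fv vg]].
exists s, (e - FVsnmax s (v \- g)); split=> [|w Fw wv]; first by rewrite subr_gt0.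
split=> //; apply: le_lt_trans (FVsnmax_triangle s Fw Fv Fg) _.
by rewrite -ltrBrDr.
Qed.

Lemma compact_net s e C : sn_compact FV sn C -> 0 < e -> exists N F, @is_net s e C N F.
Proof.
move=> [CF cover] e0.
have [|N [ls ls_cover]] := cover {g | C g} (fun g => [set w | FV w /\ FVsnmax s (w \- sval g) < e])
    (fun g => FVball_open s e (CF _ (svalP g))).
  move=> f Cf; exists (exist _ f Cf) => //.
  by split; [apply: CF | rewrite /= FVsnmax_subrr].
exists N, (fun l => sval (ls l)); split=> [l|f /ls_cover [l _ [_ fl]]]; last by exists l.
exact: CF _ (svalP (ls l)).
Qed.

Lemma net_setU s e C1 C2 N1 N2 F1 F2 : @is_net s e C1 N1 F1 -> @is_net s e C2 N2 F2 ->
  is_net s e (C1 `|` C2) (cat_fam F1 F2).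
Proof.
move=> [FF1 net1] [FF2 net2]; split=> [l|f [/net1 [l fl]|/net2 [l fl]]].
- by rewrite /cat_fam; case: (fintype.split l).
- by exists (lshift N2 l); rewrite cat_famL.
- by exists (rshift N1 l); rewrite cat_famR.
Qed.

Lemma net_bigcup s e n (Cs : 'I_n -> set (Om -> K)) :
  (forall k, exists N F, @is_net s e (Cs k) N F) ->
  exists N F, @is_net s e (\bigcup_k Cs k) N F.
Proof.
elim: n Cs => [|n IH] Cs nets.
  by exists 0, (fun=> fun=> 0); split=> [[]|f [[]]].
have [N1 [F1 net1]] := nets ord0.
have [N2 [F2 net2]] := IH (fun k => Cs (lift ord0 k)) (fun k => nets _).
have [FF net] := net_setU net1 net2.
exists (N1 + N2)%N, (cat_fam F1 F2).
split=> // f [k _ Ckf]; apply: net.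
by case: (unliftP ord0 k) Ckf => [k'|] -> Ckf; [right; exists k' | left].
Qed.

Lemma compact_bounded s C : sn_compact FV sn C ->
  exists B, 0 <= B /\ forall f, C f -> FVsnmax s f <= B.
Proof.
move=> cC; have [N [F [FF net]]] := compact_net s cC ltr01.
exists (1 + \big[Num.max/0]_(l < N) FVsnmax s (F l)).
split=> [|f Cf]; first by rewrite addr_ge0 ?bigmax_ge_id.
have [l fl] := net f Cf; have Ff : FV f by case: cC => CF _; apply: CF.
have -> : f = lcomb 1 (f \- F l) (F l) by apply: funext => w; rewrite /lcomb mul1r subrK.
apply: le_trans (FVsnmax_lcomb _ _ (FV_sub Ff (FF l)) (FF l)) _.
by rewrite absK1 mul1r lerD ?(ltW fl) // (le_bigmax _ (fun l => FVsnmax s (F l))).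
Qed.

Section FiniteBipolar.
Variables (s : seq (J * M)) (C : R) (y : (Om -> K) -> K) (N : nat) (F : 'I_N -> Om -> K)
  (eta : R).
Hypotheses (C_ge0 : 0 <= C) (dual_y : dual y) (y_bounded : FVbounded y s C)
  (FF : forall l, FV (F l)) (eta_gt0 : 0 < eta).

Let Ceta_gt0 : 0 < C + eta. Proof. by rewrite ltr_wpDl. Qed.
Let eta_ge0 := ltW eta_gt0.
Let Ceta_ge0 := ltW Ceta_gt0.

(* K^N as the real space R^(N + N): real parts in the left block, imaginary parts in the right. *)
Definition cplx (z : 'rV[R]_(N + N)) (l : 'I_N) : K :=
  embK (z 0 (lshift N l)) + embK (z 0 (rshift N l)) * iK.

Definition realify (w : 'I_N -> K) : 'rV[R]_(N + N) :=
  row_mx (\row_l ReK (w l)) (\row_l ImK (w l)).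

Lemma cplxD z1 z2 l : cplx (z1 + z2) l = cplx z1 l + cplx z2 l.
Proof. by rewrite /cplx !mxE !rmorphD; ring. Qed.

Lemma cplxZ t z l : cplx (t *: z) l = embK t * cplx z l.
Proof. by rewrite /cplx !mxE !rmorphM; ring. Qed.

Lemma cplx_realify w l : cplx (realify w) l = w l.
Proof. by rewrite /cplx row_mxEl row_mxEr !mxE -ReK_ImK_decomp. Qed.

Definition approx_cost (z : 'rV[R]_(N + N)) gs :=
  weight gs / (C + eta) + (\sum_(l < N) absK (cplx z l - combo gs (F l))) / eta.

(* The Minkowski gauge of the sum of the value vectors (g (F l))_l of the combinations g of
   weight at most C + eta and of the l^1-ball of radius eta. *)
Definition gauge z := inf [set approx_cost z gs | gs in generated s].

Lemma approx_cost_ge0 z gs : 0 <= approx_cost z gs.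
Proof.
rewrite addr_ge0 ?divr_ge0 ?weight_ge0 //.
by apply: sumr_ge0 => l _; apply: absK_ge0.
Qed.

Let generated_nil : generated s [::]. Proof. by []. Qed.

Lemma gauge_le z gs : generated s gs -> gauge z <= approx_cost z gs.
Proof.
by move=> gen; apply: ge_inf; [exists 0 => _ [? _ <-]; apply: approx_cost_ge0 | exists gs].
Qed.

Lemma gauge_lb z B : (forall gs, generated s gs -> B <= approx_cost z gs) -> B <= gauge z.
Proof.
move=> lb; apply: lb_le_inf => [|_ [gs gen <-]]; last exact: lb.
by exists (approx_cost z [::]), [::].
Qed.

Lemma gauge_ge0 z : 0 <= gauge z.
Proof. by apply: gauge_lb => gs _; apply: approx_cost_ge0. Qed.

Lemma approx_cost_cat z1 z2 gs1 gs2 :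
  approx_cost (z1 + z2) (gs1 ++ gs2) <= approx_cost z1 gs1 + approx_cost z2 gs2.
Proof.
rewrite /approx_cost /weight big_cat addrACA -!mulrDl lerD2l ler_wpM2r ?invr_ge0 //.
rewrite -big_split ler_sum // => l _.
by rewrite cplxD /combo big_cat opprD addrACA absKD.
Qed.

Lemma gaugeD z1 z2 : gauge (z1 + z2) <= gauge z1 + gauge z2.
Proof.
have gen_cat gs1 gs2 : generated s gs1 -> generated s gs2 -> generated s (gs1 ++ gs2).
  by move=> g1 g2 p /(List.in_app_or gs1 gs2 p)[/g1|/g2].
rewrite -lerBlDr; apply: gauge_lb => gs1 g1; rewrite lerBlDr -lerBlDl.
apply: gauge_lb => gs2 g2; rewrite lerBlDl.
exact: le_trans (gauge_le _ (gen_cat _ _ g1 g2)) (approx_cost_cat _ _ _ _).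
Qed.

Let scale_gens t (gs : seq (K * ((Om -> K) -> K))) := [seq (embK t * p.1, p.2) | p <- gs].

Lemma approx_cost_scale t z gs : 0 <= t ->
  approx_cost (t *: z) (scale_gens t gs) = t * approx_cost z gs.
Proof.
move=> t0; rewrite /approx_cost mulrDr !mulrA; congr (_ / _ + _ / _).
  rewrite /weight big_map mulr_sumr; apply: eq_bigr => p _.
  by rewrite absKM absK_emb ger0_norm.
rewrite mulr_sumr; apply: eq_bigr => l _.
rewrite cplxZ /combo big_map -[X in _ = X * _](ger0_norm t0) -(@absK_emb _ b) -absKM.
by rewrite mulrBr mulr_sumr; congr (absK (_ - _)); apply: eq_bigr => p _; rewrite mulrA.
Qed.

Lemma gauge_scale_le t z : 0 < t -> gauge (t *: z) <= t * gauge z.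
Proof.
move=> t0; rewrite mulrC -ler_pdivrMr //; apply: gauge_lb => gs gen.
rewrite ler_pdivrMr // mulrC -approx_cost_scale ?(ltW t0) //; apply: gauge_le.
by move=> p /(List.in_map_iff _ gs p)[q [<- /gen]].
Qed.

Lemma gaugeZ t z : 0 <= t -> gauge (t *: z) = t * gauge z.
Proof.
rewrite le_eqVlt => /predU1P[<-|t0].
  apply/eqP; rewrite mul0r eq_le gauge_ge0 andbT scale0r.
  apply: le_trans (gauge_le 0 generated_nil) _.
  by have := @approx_cost_scale 0 0 [::] (lexx 0); rewrite scale0r mul0r => ->.
apply/eqP; rewrite eq_le gauge_scale_le //= -ler_pdivlMl //.
by rewrite -[X in gauge X <= _](scalerK (lt0r_neq0 t0) z) gauge_scale_le ?invr_gt0.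
Qed.

Lemma gauge0 : gauge 0 = 0.
Proof. by rewrite -(scale0r (0 : 'rV[R]_(N + N))) gaugeZ // mul0r. Qed.

Let v := realify (fun l => y (F l)).

Lemma exists_dominated_functional : exists be : 'I_(N + N) -> R,
  (forall z : 'rV_(N + N), \sum_k z 0 k * be k <= gauge z) /\ gauge v <= \sum_k v 0 k * be k.
Proof.
have [be hbe] := sublinear_dominated_extension gaugeD gaugeZ v (fun k => 'e_k).
exists be; split=> [z|].
  by have := hbe 0 (fun k => z 0 k); rewrite mul0r add0r scale0r add0r -row_sum_delta.
have := hbe 1 (fun k => - v 0 k); rewrite mul1r scale1r.
rewrite (eq_bigr _ (fun k _ => mulNr _ _)) (eq_bigr _ (fun k _ => scaleNr _ _)) !sumrN.
by rewrite -row_sum_delta subrr gauge0; lra.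
Qed.

Section DualPoint.
Variable be : 'I_(N + N) -> R.

Definition dual_point : Om -> K :=
  fun w => \sum_(l < N) (embK (be (lshift N l)) - embK (be (rshift N l)) * iK) * F l w.

Lemma FV_dual_point : FV dual_point.
Proof. exact: FV_sum. Qed.

Lemma realify_dual_point g : dual g ->
  \sum_k realify (fun l => g (F l)) 0 k * be k = ReK (g dual_point).
Proof.
move=> dual_g; rewrite /dual_point FVdual_sum // (big_morph _ (@ReKD _ _) (@ReK0 _ _)).
rewrite big_split_ord /= -big_split; apply: eq_bigr => l _.
by rewrite row_mxEl row_mxEr !mxE ReK_pairing mulrC [ImK _ * _]mulrC.
Qed.

Lemma dual_point_small : (forall z : 'rV_(N + N), \sum_k z 0 k * be k <= gauge z) ->
  FVsnmax s dual_point <= (C + eta)^-1.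
Proof.
move=> le_gauge; apply: FVsnmax_le => [|j m x js]; first by rewrite invr_ge0.
set h := dual_point; pose ga := weighted_eval j x.
have gen : generator s ga by exists j, m, x.
have [w [w1 wR]] := exists_rotation (ga h).
pose a := embK (C + eta) * w; pose g f := a * ga f.
have dual_g : dual g := FVdual_scale _ (generator_dual gen).
have : ReK (g h) <= 1.
  rewrite -realify_dual_point //; apply: le_trans (le_gauge _) _.
  have gen_a : generated s [:: (a, ga)] by move=> p [<-|[]].
  apply: le_trans (gauge_le _ gen_a) _; rewrite /approx_cost big1 ?mul0r ?addr0.
    by rewrite /weight big_cons big_nil addr0 absKM absK_emb w1 mulr1 ger0_norm ?mulfV ?gt_eqF.
  by move=> l _; rewrite cplx_realify /combo big_cons big_nil addr0 subrr absK0.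
rewrite /g /a -mulrA ReK_embM wR -ler_pdivlMl // mulr1 /ga /weighted_eval absKM.
by rewrite absK_emb ger0_norm // mulrC.
Qed.

End DualPoint.

(* If the gauge of (y (F l))_l were at least 1, the dominated functional would yield h with
   Re y(h) >= 1 although |h|_s <= 1 / (C + eta), contradicting |y| <= C |.|_s. *)
Lemma finite_bipolar : exists gs, generated s gs /\ weight gs <= C + eta /\
  forall l, absK (y (F l) - combo gs (F l)) <= eta.
Proof.
have [be [le_gauge gauge_v]] := exists_dominated_functional.
have [gauge_v_lt1|gauge_v_ge1] := ltrP (gauge v) 1; last first.
  have h_small := dual_point_small le_gauge.
  have y_h := le_trans (y_bounded (FV_dual_point be)) (ler_wpM2l C_ge0 h_small).
  have C_lt : C * (C + eta)^-1 < 1 by rewrite ltr_pdivrMr // mul1r ltrDl.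
  have := ReK_le (y (dual_point be)); rewrite -realify_dual_point //; lra.
have [_ [gs gen <-]] : exists2 r, [set approx_cost v gs | gs in generated s] r & r < 1.
  rewrite -[1](subrK (gauge v)) addrC; apply: inf_adherent; first by rewrite subr_gt0.
  split; first by exists (approx_cost v [::]), [::].
  by exists 0 => _ [gs _ <-]; apply: approx_cost_ge0.
rewrite /approx_cost => cost_lt1; exists gs; split=> //.
have weight_ge0 := weight_ge0 gs; set S := \sum_(l < N) _ in cost_lt1.
have S_ge0 : 0 <= S by apply: sumr_ge0 => l _; apply: absK_ge0.
have : weight gs / (C + eta) < 1 by have := divr_ge0 S_ge0 eta_ge0; lra.
rewrite ltr_pdivrMr // mul1r => /ltW; split=> // l.
have : S / eta < 1 by have := divr_ge0 weight_ge0 Ceta_ge0; lra.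
rewrite ltr_pdivrMr // mul1r => /ltW; apply: le_trans.
rewrite /S (bigD1 l) //= -[y (F l)](cplx_realify (fun l => y (F l))) lerDl.
by apply: sumr_ge0 => k _; apply: absK_ge0.
Qed.

End FiniteBipolar.

Lemma approx_on_compacts s C y n (Cs : 'I_n -> set (Om -> K)) eta :
  0 <= C -> dual y -> FVbounded y s C -> (forall k, sn_compact FV sn (Cs k)) ->
  0 < eta -> eta <= 1 ->
  exists gs, generated s gs /\ weight gs <= C + eta /\
    forall k f, Cs k f -> absK (y f - combo gs f) <= (2 * C + 2) * eta.
Proof.
move=> C0 dual_y y_bnd compacts eta0 eta1.
have [N [F [FF net]]] := net_bigcup (fun k => compact_net s (compacts k) eta0).
have [gs [gen [weight_le approx]]] := finite_bipolar C0 dual_y y_bnd FF eta0.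
exists gs; split=> //; split=> // k f Ckf.
have Ff : FV f by case: (compacts k) => CF _; apply: CF.
have [l fl] := net f (ex_intro2 _ _ k I Ckf).
pose d := fun f => -1 * combo gs f + y f.
have dual_d : dual d := FVdual_lin (-1) (combo_dual gen) dual_y.
have dE g : y g - combo gs g = d g by rewrite /d mulN1r addrC.
have FfF := FV_sub Ff (FF l).
rewrite dE; have -> : d f = d (f \- F l) + d (F l).
  have fE : f = lcomb 1 (f \- F l) (F l) by apply: funext => w; rewrite /lcomb mul1r subrK.
  by rewrite {1}fE FVdual_lcomb // mul1r.
apply: le_trans (absKD _ _) _.
have near : absK (d (f \- F l)) <= (C + eta) * eta + C * eta.
  apply: le_trans (absKD _ _) _; rewrite absKM absKN1 mul1r.
  have q_small := ltW fl; have q0 : 0 <= FVsnmax s (f \- F l) := bigmax_ge0 _ _.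
  apply: lerD; first apply: le_trans (combo_bound gen FfF) _.
    exact: ler_pM (weight_ge0 _) q0 weight_le q_small.
  exact: le_trans (y_bnd _ FfF) (ler_wpM2l C0 q_small).
have := approx l; rewrite dE; have := ler_wpM2l (ltW eta0) eta1; nra.
Qed.

Section EpsilonProduct.
Context (E : lmodType K) (A : Type) (pE : A -> E -> R).
Hypothesis pE_seminorm : forall al, is_seminorm (pE al).

Local Notation epsE := (FVepsE nu AP domT T pE).
Local Notation wsnE := (wsn nu T pE).
Local Notation epsn := (@eps_sn R b Om J M om nu AP domT T E A pE).

Lemma pEZ al a e : pE al (a *: e) = absK a * pE al e. Proof. by case: (pE_seminorm al) => _ []. Qed.
Lemma pED al e1 e2 : pE al (e1 + e2) <= pE al e1 + pE al e2.
Proof. by case: (pE_seminorm al) => _ []. Qed.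

Lemma pE0 al : pE al 0 = 0.
Proof. by rewrite -(scale0r (0 : E)) pEZ absK0 mul0r. Qed.

Lemma pEB al e1 e2 : pE al (e1 - e2) <= pE al e1 + pE al e2.
Proof. by rewrite -scaleN1r; apply: le_trans (pED _ _ _) _; rewrite pEZ absKN1 mul1r. Qed.

Lemma epsE_lin u a y1 y2 : epsE u -> dual y1 -> dual y2 ->
  u (fun f => a * y1 f + y2 f) = a *: u y1 + u y2.
Proof. by case=> lin _; apply: lin. Qed.

Lemma epsE0 u : epsE u -> u (fun=> 0) = 0.
Proof.
move=> eu; have := epsE_lin (-1) eu FVdual_zero FVdual_zero.
by rewrite scaleN1r addNr => <-; congr u; apply: funext => f; rewrite mulr0 addr0.
Qed.

Lemma epsE_scale u a y : epsE u -> dual y -> u (fun f => a * y f) = a *: u y.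
Proof.
move=> eu dy; have := epsE_lin a eu dy FVdual_zero; rewrite epsE0 // addr0.
by have -> : (fun f => a * y f + 0) = (fun f => a * y f) by apply: funext => f; rewrite addr0.
Qed.

Lemma epsE_continuous u al : epsE u -> exists n (Cs : 'I_n -> set (Om -> K)) c,
  (forall k, FVabsconv_compact nu AP domT T (Cs k)) /\ 0 <= c /\
  forall y, dual y -> pE al (u y) <= c * \big[Num.max/0]_(k < n) sup [set absK (y f) | f in Cs k].
Proof.
case=> _ /(_ al) [n [Cs [compacts [c cont]]]].
exists n, Cs, (Num.max c 0); split=> //; split=> [|y dy]; first by rewrite le_max lexx orbT.
by apply: le_trans (cont y dy) _; rewrite ler_wpM2r ?bigmax_ge_id ?le_max ?lexx.
Qed.

Lemma epsE_bounded u s al : epsE u -> exists B, 0 <= B /\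
  forall y C, 0 <= C -> dual y -> FVbounded y s C -> pE al (u y) <= C * B.
Proof.
move=> eu; have [n [Cs [c [compacts [c0 cont]]]]] := epsE_continuous al eu.
have : forall k, exists B, 0 <= B /\ forall f, Cs k f -> FVsnmax s f <= B.
  by move=> k; apply: compact_bounded; case: (compacts k).
case/boolp.choice => B hB.
exists (c * \big[Num.max/0]_(k < n) B k); split=> [|y C C0 dy y_bnd].
  by rewrite mulr_ge0 ?bigmax_ge_id.
apply: le_trans (cont y dy) _; rewrite mulrCA ler_wpM2l //.
apply: bigmax_le => [|k _]; first by rewrite mulr_ge0 ?bigmax_ge_id.
apply: sup_image_le => [|f Ckf]; first by rewrite mulr_ge0 ?bigmax_ge_id.
have Ff : FV f by case: (compacts k) => _ [CF _]; apply: CF.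
apply: le_trans (y_bnd f Ff) (ler_wpM2l C0 _).
exact: le_trans (proj2 (hB k) f Ckf) (le_bigmax _ B k).
Qed.

Lemma epsE_weighted_eval u al j m (x : om m) : epsE u ->
  pE al (u (weighted_eval j x)) = pE al (u (Tmx T x)) * nu j x.
Proof. by move=> eu; rewrite (epsE_scale _ eu (Tmx_dual x)) pEZ absK_emb ger0_norm // mulrC. Qed.

Lemma wsn_bounded u j m al : epsE u ->
  has_ubound (range (fun x : om m => pE al (u (Tmx T x)) * nu j x)).
Proof.
move=> eu; have [B [B0 hB]] := epsE_bounded [:: (j, m)] al eu.
exists B => _ [x _ <-]; rewrite -epsE_weighted_eval // -[B]mul1r.
have gen : generator [:: (j, m)] (weighted_eval j x) by exists j, m, x; split=> //; left.
exact: hB (generator_dual gen) (generator_bound gen).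
Qed.

Lemma wsn_ub u j m al (x : om m) : epsE u ->
  pE al (u (Tmx T x)) * nu j x <= wsnE ((j, m), al) u.
Proof. by move=> eu; apply: ub_le_sup; [exact: wsn_bounded | exists x]. Qed.

Lemma epsE_combo_le u s al gs : epsE u -> generated s gs ->
  pE al (u (combo gs)) <= weight gs * bigmax s (fun i => wsnE (i, al) u).
Proof.
move=> eu; elim: gs => [_|p gs IH /[dup] gen /generated_cons[gen_p gen_gs]].
  have -> : combo [::] = fun=> 0 by apply: funext => f; rewrite /combo big_nil.
  by rewrite epsE0 // pE0 /weight big_nil mul0r.
rewrite combo_cons (epsE_lin _ eu (generator_dual gen_p) (combo_dual gen_gs)).
apply: le_trans (pED _ _ _) _; rewrite pEZ /weight big_cons mulrDl.
apply: lerD; last exact: IH.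
rewrite ler_wpM2l ?absK_ge0 //; have [j [m [x [js ->]]]] := gen_p.
rewrite epsE_weighted_eval //; apply: le_trans (wsn_ub j al x eu) _.
exact: (le_bigmax_In (fun i => wsnE (i, al) u) js).
Qed.

Lemma epsE_dual_le u s al y C : epsE u -> 0 <= C -> dual y -> FVbounded y s C ->
  pE al (u y) <= C * bigmax s (fun i => wsnE (i, al) u).
Proof.
move=> eu C0 dy y_bnd; set W := bigmax s _; have W0 : 0 <= W := bigmax_ge0 _ _.
have [n [Cs [c [compacts [c0 cont]]]]] := epsE_continuous al eu.
apply: (@ler_add_small _ _ _ (c * (2 * C + 2) + W)) => [|eta eta0 eta1].
  by rewrite addr_ge0 ?mulr_ge0 ?addr_ge0 ?mulr_ge0.
have [gs [gen [weight_le approx]]] :=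
  approx_on_compacts C0 dy y_bnd (fun k => proj2 (compacts k)) eta0 eta1.
pose d := fun f => -1 * combo gs f + y f.
have dual_d : dual d := FVdual_lin (-1) (combo_dual gen) dy.
have -> : y = fun f => 1 * d f + combo gs f by apply: funext => f; rewrite /d; ring.
rewrite (epsE_lin _ eu dual_d (combo_dual gen)) scale1r; apply: le_trans (pED _ _ _) _.
have d_small : pE al (u d) <= c * ((2 * C + 2) * eta).
  apply: le_trans (cont d dual_d) _; rewrite ler_wpM2l //.
  apply: bigmax_le => [|k _]; first by rewrite mulr_ge0 ?addr_ge0 ?mulr_ge0 ?(ltW eta0).
  apply: sup_image_le => [|f Ckf]; first by rewrite mulr_ge0 ?addr_ge0 ?mulr_ge0 ?(ltW eta0).
  by rewrite /d mulN1r addrC; apply: approx Ckf.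
have combo_le : pE al (u (combo gs)) <= (C + eta) * W.
  by apply: le_trans (epsE_combo_le al eu gen) _; rewrite ler_wpM2r.
have -> : C * W + eta * (c * (2 * C + 2) + W) = c * ((2 * C + 2) * eta) + (C + eta) * W by ring.
exact: lerD.
Qed.

Lemma eps_sn_dominated (i : eps_index nu AP domT T A) :
  exists (s : seq (J * M * A)) c,
    0 <= c /\ forall u, epsE u -> epsn i u <= c * bigmax s (fun k => wsnE k u).
Proof.
case: i => [[H [H_dual [sH [CH H_bnd]]]] al].
have CH0 : 0 <= Num.max CH 0 by rewrite le_max lexx orbT.
exists [seq (jm, al) | jm <- sH], (Num.max CH 0); split=> // u eu.
rewrite /bigmax big_map; apply: sup_image_le => [|y Hy]; first by rewrite mulr_ge0 ?bigmax_ge0.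
apply: epsE_dual_le (H_dual _ Hy) _ => //.
move=> f Ff; apply: le_trans (H_bnd y f Hy Ff) _.
by rewrite ler_wpM2r ?bigmax_ge0 // le_max lexx.
Qed.

Definition unit_polar (jm : J * M) := [set y | dual y /\ FVbounded y [:: jm] 1].

Lemma unit_polar_equicont jm : FVequicont nu AP domT T (unit_polar jm).
Proof. by split=> [y []//|]; exists [:: jm], 1 => y f [_ y_bnd]; apply: y_bnd. Qed.

Lemma wsn_dominated (i : J * M * A) :
  exists (s : seq (eps_index nu AP domT T A)) c,
    0 <= c /\ forall u, epsE u -> wsnE i u <= c * bigmax s (fun k => epsn k u).
Proof.
case: i => [[j m] al]; pose H := exist _ (unit_polar (j, m)) (unit_polar_equicont (j, m)).
exists [:: (H, al)], 1; split=> // u eu.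
rewrite mul1r /bigmax big_cons big_nil le_max; apply/orP; left.
have [B [B0 hB]] := epsE_bounded [:: (j, m)] al eu.
have ub : has_ubound [set pE al (u y) | y in unit_polar (j, m)].
  by exists B => _ [y [dy y_bnd] <-]; rewrite -[B]mul1r; apply: hB.
apply: ge_sup => [|_ [x _ <-]]; first by have [x] := om_inhabited m; eexists; exists x.
apply: ub_le_sup => //; exists (weighted_eval j x); last exact: epsE_weighted_eval.
have gen : generator [:: (j, m)] (weighted_eval j x) by exists j, m, x; split=> //; left.
by split; [apply: generator_dual gen | apply: generator_bound gen].
Qed.

Lemma epsE_sub u1 u2 : epsE u1 -> epsE u2 -> epsE (u2 \- u1).
Proof.
move=> e1 e2; split=> [a y1 y2 d1 d2|al].
  by rewrite /= !epsE_lin // scalerBr opprD addrACA.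
have [n1 [Cs1 [c1 [compacts1 [c10 cont1]]]]] := epsE_continuous al e1.
have [n2 [Cs2 [c2 [compacts2 [c20 cont2]]]]] := epsE_continuous al e2.
exists (n2 + n1)%N, (cat_fam Cs2 Cs1); split=> [k|].
  by rewrite /cat_fam; case: (fintype.split k).
exists (c2 + c1) => y dy /=; apply: le_trans (pEB _ _ _) _; rewrite mulrDl.
have [le2 le1] := (bigmax_cat_famL Cs2 Cs1 (fun C => sup [set absK (y f) | f in C]),
                   bigmax_cat_famR Cs2 Cs1 (fun C => sup [set absK (y f) | f in C])).
apply: lerD; [apply: le_trans (cont2 y dy) _ | apply: le_trans (cont1 y dy) _].
  by apply: ler_wpM2l.
by apply: ler_wpM2l.
Qed.

Lemma sn_open_eps_wsn U : sn_open epsE epsn U <-> sn_open epsE wsnE U.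
Proof.
split; apply: sn_open_dominated => [v w|i]; try exact: epsE_sub.
  exact: eps_sn_dominated.
exact: wsn_dominated.
Qed.

End EpsilonProduct.
End WeightedSpace.

Theorem lemma3p7 (R : realType) (b : bool)
  (Om J M : Type) (om : M -> Type)
  (nu : J -> forall m : M, om m -> R)
  (AP : set (Om -> KK R b)) (domT : M -> set (Om -> KK R b))
  (T : forall m : M, (Om -> KK R b) -> om m -> KK R b)
  (E : lmodType (KK R b)) (A : Type) (pE : A -> E -> R) :
  (* standing assumptions *)
  inhabited J -> inhabited M -> (forall m, inhabited (om m)) ->
  (forall j m x, 0 <= nu j m x) ->
  (forall m (x : om m), exists j, 0 < nu j m x) ->
  lin_subspace AP ->
  (forall m, lin_subspace (domT m)) ->
  (forall m, lin_on (domT m) (T m)) ->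
  (* FV(Omega) is a dom-space *)
  dom_space nu AP domT T ->
  (* E non-trivial lcHs with directed fundamental system of seminorms *)
  nontriv_lcHs_directed pE ->
  (* (a) *)
  (forall m (x : om m), FVdual nu AP domT T (Tmx T x)) /\
  (* (b) the seminorms ||.||_{j,m,alpha} are finite on FV eps E ... *)
  (forall u, FVepsE nu AP domT T pE u ->
     forall (j : J) (m : M) (al : A),
       has_ubound (range (fun x : om m => pE al (u (Tmx T x)) * nu j m x))) /\
  (* ... and generate the topology of FV eps E *)
  (forall U, sn_open (FVepsE nu AP domT T pE) (@eps_sn R b Om J M om nu AP domT T E A pE) U
             <-> sn_open (FVepsE nu AP domT T pE) (wsn nu T pE) U).
Proof.
move=> _ _ om_inhabited nu_ge0 nu_pos AP_subspace domT_subspace T_linear _ [pE_seminorm _].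
split=> [m x|]; first exact: (Tmx_dual AP T_linear nu_pos x).
split=> [u eu j m al|U].
  exact: (wsn_bounded om_inhabited nu_ge0 AP_subspace domT_subspace T_linear nu_pos
            pE_seminorm j m al eu).
exact: (sn_open_eps_wsn om_inhabited nu_ge0 AP_subspace domT_subspace T_linear nu_pos
          pE_seminorm U).
Qed.
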